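(* Let $R$ be a $\sigma$-(sps) Armendariz ring, where $\sigma$ is an endomorphism of $R$. The following are equivalent: (1) $R$ is reversible; (2) $R$ is $\sigma$-reversible; (3) $R$ is right $\sigma$-reversible; (4) $R[[x;\sigma]]$ is reversible. Likewise, the following are equivalent: (1') $R$ is symmetric; (2') $R$ is $\sigma$-symmetric; (3') $R$ is right $\sigma$-symmetric; (4') $R[[x;\sigma]]$ is symmetric.
   Context: All rings are associative with identity; $\sigma$ denotes a nonzero, non-identity ring endomorphism of $R$. The skew power series ring $R[[x;\sigma]]$ consists of all formal series $\sum_{i=0}^\infty a_i x^i$ with $a_i\in R$, added termwise and multiplied using distributivity and the rule $xa=\sigma(a)x$ for $a\in R$. A ring $R$ is $\sigma$-(sps) Armendariz if whenever $p=\sum_{i=0}^\infty a_ix^i$ and $q=\sum_{j=0}^\infty b_jx^j$ in $R[[x;\sigma]]$ satisfy $pq=0$, then $a_ib_j=0$ for all $i,j$. A ring $S$ is reversible if $ab=0$ implies $ba=0$; symmetric if $abc=0$ implies $acb=0$. $R$ is right $\sigma$-reversible if $ab=0$ implies $b\sigma(a)=0$ for $a,b\in R$; left $\sigma$-reversible if $ab=0$ implies $\sigma(b)a=0$; $\sigma$-reversible if both. $R$ is right $\sigma$-symmetric if $abc=0$ implies $ac\sigma(b)=0$ for $a,b,c\in R$; left $\sigma$-symmetric if $abc=0$ implies $\sigma(b)ac=0$; $\sigma$-symmetric if both. *)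

From HB Require Import structures.
From mathcomp Require Import all_boot all_order all_algebra.
Set Implicit Arguments. Unset Strict Implicit. Unset Printing Implicit Defensive.
Import GRing.Theory.
Local Open Scope ring_scope.

(* Skew power series ring R[[x;sigma]]: a series sum a_i x^i is its
   coefficient function nat -> R.  Using x b = sigma(b) x, one gets
   (sum a_i x^i)(sum b_j x^j) = sum_n (sum_{i<=n} a_i sigma^i(b_{n-i})) x^n. *)
Definition spseries (R : nzRingType) := nat -> R.

Definition spzero (R : nzRingType) : spseries R := fun _ => 0.

Definition spmul (R : nzRingType) (s : R -> R) (p q : spseries R) : spseries R :=
  fun n => \sum_(i < n.+1) p i * iter i s (q (n - i)%N).

Definition sps_Armendariz (R : nzRingType) (s : R -> R) : Prop :=
  forall p q : spseries R, spmul s p q = spzero R ->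
    forall i j : nat, p i * q j = 0.

Definition reversible (R : nzRingType) : Prop :=
  forall a b : R, a * b = 0 -> b * a = 0.
Definition symmetric_ring (R : nzRingType) : Prop :=
  forall a b c : R, a * b * c = 0 -> a * c * b = 0.

Definition right_sigma_reversible (R : nzRingType) (s : R -> R) : Prop :=
  forall a b : R, a * b = 0 -> b * s a = 0.
Definition left_sigma_reversible (R : nzRingType) (s : R -> R) : Prop :=
  forall a b : R, a * b = 0 -> s b * a = 0.
Definition sigma_reversible (R : nzRingType) (s : R -> R) : Prop :=
  right_sigma_reversible s /\ left_sigma_reversible s.

Definition right_sigma_symmetric (R : nzRingType) (s : R -> R) : Prop :=
  forall a b c : R, a * b * c = 0 -> a * c * s b = 0.
Definition left_sigma_symmetric (R : nzRingType) (s : R -> R) : Prop :=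
  forall a b c : R, a * b * c = 0 -> s b * a * c = 0.
Definition sigma_symmetric (R : nzRingType) (s : R -> R) : Prop :=
  right_sigma_symmetric s /\ left_sigma_symmetric s.

Definition sps_reversible (R : nzRingType) (s : R -> R) : Prop :=
  forall p q : spseries R, spmul s p q = spzero R -> spmul s q p = spzero R.
Definition sps_symmetric (R : nzRingType) (s : R -> R) : Prop :=
  forall p q r : spseries R, spmul s (spmul s p q) r = spzero R ->
    spmul s (spmul s p r) q = spzero R.

From HB Require Import structures.
From mathcomp Require Import all_boot all_order all_algebra.
From Stdlib Require Import FunctionalExtensionality.
Set Implicit Arguments. Unset Strict Implicit. Unset Printing Implicit Defensive.
Import GRing.Theory.
Local Open Scope ring_scope.

(* Everything rests on two facts about a sigma-(sps)
   Armendariz ring R:  a b = 0 implies a sigma(b) = 0 (use the series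
   (a + a x)(b - sigma(b) x + sigma^2(b) x^2 - ...), whose product is 0),
   and conversely a sigma(b) = 0 implies a b = 0 (use (a x) b = 0).
   Hence annihilation a b = 0 is insensitive to applying sigma^n to b.
   - reversible <-> (right) sigma-reversible, and symmetric <-> (right)
     sigma-symmetric, follow by composing these facts with the ring axioms;
   - if R is reversible (symmetric), the Armendariz property turns a vanishing
     product of series into vanishing products of coefficients, which can be
     swapped and twisted by sigma^n, so R[[x;sigma]] is reversible (symmetric);
   - conversely, reversibility (symmetry) of R[[x;sigma]] restricts to the
     constant series, i.e. to R. *)

Section SkewPowerSeries.

Variables (R : nzRingType) (s : {rmorphism R -> R}).

Definition const_series (a : R) : spseries R :=
  fun n => if n is 0%N then a else 0.

Lemma spmul_eq0 (p q : spseries R) :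
  (forall i j : nat, p i * iter i s (q j) = 0) -> spmul s p q = spzero R.
Proof.
by move=> pq0; apply: functional_extensionality => n; apply: big1 => i _.
Qed.

Lemma spmul_constl (a : R) (q : spseries R) :
  spmul s (const_series a) q = fun n => a * q n.
Proof.
apply: functional_extensionality => n.
rewrite /spmul big_ord_recl /= subn0 big1 ?addr0 // => i _.
by rewrite mul0r.
Qed.

Lemma spmul_const (a b : R) :
  spmul s (const_series a) (const_series b) = const_series (a * b).
Proof.
by rewrite spmul_constl; apply: functional_extensionality => -[|n] //=; rewrite mulr0.
Qed.

Lemma const_series_eq0 (a : R) : const_series a = spzero R <-> a = 0.
Proof.
split=> [/(congr1 (fun f => f 0%N)) //| ->].
by apply: functional_extensionality => -[|n].
Qed.

Lemma mulr_spmul (r : R) (p q : spseries R) (n : nat) :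
  r * spmul s p q n = spmul s (fun k => r * p k) q n.
Proof. by rewrite /spmul mulr_sumr; apply: eq_bigr => i _; rewrite mulrA. Qed.

Hypothesis HA : sps_Armendariz s.

(* The series b - sigma(b) x + sigma^2(b) x^2 - ..., a right annihilator
   of (a + a x) whenever a b = 0. *)
Fixpoint alt_series (b : R) (n : nat) : R :=
  if n is m.+1 then - s (alt_series b m) else b.

Lemma armendariz_mul_sigma (a b : R) : a * b = 0 -> a * s b = 0.
Proof.
move=> ab0.
pose p : spseries R := fun n => if (n <= 1)%N then a else 0.
have pq0 : spmul s p (alt_series b) = spzero R.
  apply: functional_extensionality => -[|m]; rewrite /spmul /spzero.
    by rewrite big_ord_recl big_ord0 addr0.
  rewrite big_ord_recl big_ord_recl big1 ?addr0 => [|i _]; last by rewrite mul0r.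
  by rewrite /p /= /bump /= subn1 mulrN addNr.
have := HA pq0 0 1; rewrite /p /= mulrN => /eqP.
by rewrite oppr_eq0 => /eqP.
Qed.

Lemma armendariz_mul_iter (a b : R) (n : nat) : a * b = 0 -> a * iter n s b = 0.
Proof. by move=> ab0; elim: n => //= n; apply: armendariz_mul_sigma. Qed.

(* Converse: (a x) b = a sigma(b) x, so a sigma(b) = 0 makes a x and b
   annihilate each other, and Armendariz yields a b = 0. *)
Lemma armendariz_mul_unsigma (a b : R) : a * s b = 0 -> a * b = 0.
Proof.
move=> asb0.
pose p : spseries R := fun n => if n == 1%N then a else 0.
have pq0 : spmul s p (const_series b) = spzero R.
  apply: functional_extensionality => n; apply: big1 => -[[|[|i]] Hi] _;
    rewrite /p /= ?mul0r //.
  by case: n Hi => [|[|n]] //= _; rewrite rmorph0 mulr0.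
exact: HA pq0 1 0.
Qed.

Lemma symmetric_reversible : symmetric_ring R -> reversible R.
Proof. by move=> S a b; have := S 1 a b; rewrite !mul1r. Qed.

Lemma reversible_right_sigma : reversible R -> right_sigma_reversible s.
Proof. by move=> Rv a b /Rv /armendariz_mul_sigma. Qed.

Lemma reversible_left_sigma : reversible R -> left_sigma_reversible s.
Proof. by move=> Rv a b /armendariz_mul_sigma /Rv. Qed.

Lemma right_sigma_reversible_reversible : right_sigma_reversible s -> reversible R.
Proof. by move=> Rs a b /Rs /armendariz_mul_unsigma. Qed.

Lemma symmetric_right_sigma : symmetric_ring R -> right_sigma_symmetric s.
Proof. by move=> S a b c /S /armendariz_mul_sigma. Qed.

Lemma symmetric_left_sigma : symmetric_ring R -> left_sigma_symmetric s.
Proof.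
move=> S a b c /S /armendariz_mul_sigma /(symmetric_reversible S).
by rewrite mulrA.
Qed.

Lemma right_sigma_symmetric_symmetric : right_sigma_symmetric s -> symmetric_ring R.
Proof. by move=> Rs a b c /Rs /armendariz_mul_unsigma. Qed.

(* pq = 0 gives q_j p_i = 0 coefficientwise, hence q_j sigma^j(p_i) = 0. *)
Lemma reversible_sps_reversible : reversible R -> sps_reversible s.
Proof.
by move=> Rv p q pq0; apply: spmul_eq0 => i j; apply/armendariz_mul_iter/Rv/HA.
Qed.

Lemma symmetric_mul_iter (x y z : R) (m k : nat) :
  symmetric_ring R -> x * y * z = 0 -> x * iter m s y * iter k s z = 0.
Proof.
by move=> S /S /(armendariz_mul_iter m) /S /(armendariz_mul_iter k).
Qed.

(* (pq)r = 0 forces every product p_k r_j q_l of coefficients to vanish: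
   Armendariz twice, first for (pq, r), then for (r_j p, q). *)
Lemma symmetric_coeffs (p q r : spseries R) :
  symmetric_ring R -> spmul s (spmul s p q) r = spzero R ->
  forall j k l : nat, p k * r j * q l = 0.
Proof.
move=> S pqr0 j k l.
have Rv := symmetric_reversible S.
have rpq0 : spmul s (fun k => r j * p k) q = spzero R.
  apply: functional_extensionality => n.
  by rewrite -mulr_spmul; apply/Rv/HA.
by have := HA rpq0 k l; rewrite -mulrA => /Rv /S.
Qed.

Lemma symmetric_sps_symmetric : symmetric_ring R -> sps_symmetric s.
Proof.
move=> S p q r pqr0; apply: spmul_eq0 => m l.
rewrite /spmul mulr_suml; apply: big1 => k _.
exact/symmetric_mul_iter/symmetric_coeffs.
Qed.

End SkewPowerSeries.

(* Restricting to constant series recovers the ring R. *)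
Lemma sps_reversible_reversible (R : nzRingType) (s : {rmorphism R -> R}) :
  sps_reversible s -> reversible R.
Proof.
move=> Rv a b ab0; apply/const_series_eq0; rewrite -(spmul_const s).
by apply: Rv; rewrite spmul_const; apply/const_series_eq0.
Qed.

Lemma sps_symmetric_symmetric (R : nzRingType) (s : {rmorphism R -> R}) :
  sps_symmetric s -> symmetric_ring R.
Proof.
move=> S a b c abc0; apply/const_series_eq0.
rewrite -!(spmul_const s); apply: S; rewrite !spmul_const.
exact/const_series_eq0.
Qed.

Theorem theorem2p7 (R : nzRingType) (s : {rmorphism R -> R})
  (s_nonzero : exists a : R, s a != 0) (s_nonid : exists a : R, s a != a)
  (HA : sps_Armendariz s) :
  ((reversible R <-> sigma_reversible s) /\
   (reversible R <-> right_sigma_reversible s) /\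
   (reversible R <-> sps_reversible s)) /\
  ((symmetric_ring R <-> sigma_symmetric s) /\
   (symmetric_ring R <-> right_sigma_symmetric s) /\
   (symmetric_ring R <-> sps_symmetric s)).
Proof.
have rev_r := reversible_right_sigma HA.
have r_rev := right_sigma_reversible_reversible HA.
have sym_r := symmetric_right_sigma HA.
have r_sym := right_sigma_symmetric_symmetric HA.
split; (split; [|split; [|split]]).
- split=> [Rv|[/r_rev //]]; split; [exact: rev_r | exact: reversible_left_sigma].
- by split.
- exact: reversible_sps_reversible.
- exact: sps_reversible_reversible.
- split=> [S|[/r_sym //]]; split; [exact: sym_r | exact: symmetric_left_sigma].
- by split.
- exact: symmetric_sps_symmetric.
- exact: sps_symmetric_symmetric.
Qed.
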